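(* Let $(\mathcal S,E)$ be an information structure, $Q$ an adapted probability functor, $\alpha>0$, and let $f$ be a $1$-cocycle in $Z^1(\mathcal S,F_\alpha(Q))$. Then (1) $f[\mathbf 1]\equiv0$; and (2) for every $X\in\mathrm{Ob}\,\mathcal S$ and every $x\in E_X$ such that the Dirac law $\delta_x$ belongs to $Q_X$, $f[X](\delta_x)=0$.
   Context: An information structure is a pair $(\mathcal S,E)$: $\mathcal S$ a small poset category with terminal object $\mathbf 1$ and finite-dimensional nerve, in which the product $XY:=X\wedge Y$ exists whenever $X$ and $Y$ have a common refinement, and $E:\mathcal S\to\mathcal{Sets}$ a functor ($E_X:=E(X)$) with $E(\mathbf 1)$ a singleton, $E(\pi)$ a strict surjection for non-identity arrows, $|E(\pi)^{-1}(x)\cap E(\sigma)^{-1}(y)|\le1$ for product diagrams $X\xleftarrow{\pi}X\wedge Y\xrightarrow{\sigma}Y$, and every $x\in E(X)$ the $X$-component of an element of $\lim E$. $\mathcal S_X=\{Y:X\to Y\}$. A probability functor $Q$ gives a simplicial subcomplex $Q_X$ of the simplex of laws on $E_X$ for each $X$, with marginalizations $\pi_*$; $P(Y=y):=\pi_*P(y)$; conditional laws $P|_{Y=y}$; $Q$ adapted = stable under conditioning. $F_\alpha(Q_X)$: measurable functions on $Q_X$ with action $(Y.f)(P)=\sum_{y\in E_Y}P(Y=y)^\alpha f(P|_{Y=y})$ (zero summands when $P(Y=y)=0$). A $1$-cochain is a family of measurable functions $f_X[Y]$ on $Q_X$ for $Y\in\mathcal S_X$, with $f_X[Y](P)=f_Y[Y](Y_*P)$;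 one writes $f[Y]$. It is a $1$-cocycle if for all $X$ and $Y,Z\in\mathcal S_X$: $Y.f[Z]-f[YZ]+f[Y]=0$ as functions on $Q_X$. *)

From HB Require Import structures.
From mathcomp Require Import all_boot all_order all_algebra.
From mathcomp Require Import reals exp.
Set Implicit Arguments. Unset Strict Implicit. Unset Printing Implicit Defensive.
Import Order.TTheory GRing.Theory Num.Theory.
Local Open Scope ring_scope.

(** Poset-level notions.  [arr X Y] means there is an arrow X -> Y in S,
    i.e. Y is in S_X (X refines Y). *)
Definition is_meet {T : Type} (arr : T -> T -> bool) (M X Y : T) : Prop :=
  [/\ arr M X, arr M Y & forall W, arr W X -> arr W Y -> arr W M].

(** chains X_0 -> X_1 -> ... of non-identity arrows (non-degenerate simplices
    of the nerve) *)
Fixpoint strict_chain {T : Type} (arr : T -> T -> bool) (s : seq T) : Prop :=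
  match s with
  | x :: ((y :: _) as t) => [/\ arr x y, x <> y & strict_chain arr t]
  | _ => True
  end.

Record infoStructure := InfoStructure {
  Ob : Type;
  arr : Ob -> Ob -> bool;
  oneS : Ob;
  E : Ob -> finType;
  Emap : forall X Y : Ob, arr X Y -> E X -> E Y;
  arr_refl : forall X, arr X X;
  arr_trans : forall X Y Z, arr X Y -> arr Y Z -> arr X Z;
  arr_anti : forall X Y, arr X Y -> arr Y X -> X = Y;
  one_terminal : forall X, arr X oneS;
  nerve_findim : exists N : nat, forall s : seq Ob, strict_chain arr s -> (size s <= N)%N;
  meet_exists : forall X Y W, arr W X -> arr W Y -> exists M, is_meet arr M X Y;
  Emap_id : forall X (h : arr X X) (x : E X), Emap h x = x;
  Emap_comp : forall X Y Z (h1 : arr X Y) (h2 : arr Y Z) (h3 : arr X Z) (x : E X),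
      Emap h2 (Emap h1 x) = Emap h3 x;
  E_one : #|E oneS| = 1%N;
  Emap_strict_surj : forall X Y (h : arr X Y), X <> Y ->
      (forall y : E Y, exists x : E X, Emap h x = y) /\ ~ injective (Emap h);
  Emap_product : forall X Y M (hX : arr M X) (hY : arr M Y), is_meet arr M X Y ->
      forall m m' : E M, Emap hX m = Emap hX m' -> Emap hY m = Emap hY m' -> m = m';
  E_limit : forall X (x : E X), exists s : (forall Y, E Y),
      s X = x /\ forall Y Z (h : arr Y Z), Emap h (s Y) = s Z
}.

Section Prob.
Variables (R : realType) (S : infoStructure).

Definition is_law (X : Ob S) (P : {ffun E X -> R}) : Prop :=
  (forall x, 0 <= P x) /\ \sum_x P x = 1.

Definition supp (X : Ob S) (P : {ffun E X -> R}) : {set E X} :=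
  [set x | P x != 0].

Definition marg (X Y : Ob S) (h : arr X Y) (P : {ffun E X -> R}) : {ffun E Y -> R} :=
  [ffun y => \sum_(x | Emap h x == y) P x].

(** conditional law P|_{Y=y} (only meaningful when P(Y=y) > 0) *)
Definition cond (X Y : Ob S) (h : arr X Y) (P : {ffun E X -> R}) (y : E Y)
  : {ffun E X -> R} :=
  [ffun x => if Emap h x == y then P x / marg h P y else 0].

Definition dirac (X : Ob S) (x : E X) : {ffun E X -> R} :=
  [ffun x' => if x' == x then 1 else 0].

End Prob.

(** Probability functor: Q_X is a simplicial subcomplex of the simplex of laws
    on E_X, given by a downward-closed family of faces; Q_X is the union of the
    closed faces. *)
Record probFunctor (R : realType) (S : infoStructure) := ProbFunctor {
  faces : forall X : Ob S, {set E X} -> bool;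
  faces_down : forall X (A B : {set E X}), faces A -> B \subset A -> faces B;
  inQ : forall X : Ob S, {ffun E X -> R} -> Prop :=
    fun X P => is_law P /\ exists A, faces A /\ supp P \subset A;
  marg_inQ : forall X Y (h : arr X Y) P, inQ P -> inQ (marg h P)
}.

Definition adapted (R : realType) (S : infoStructure) (Q : probFunctor R S) : Prop :=
  forall X Y (h : arr X Y) (P : {ffun E X -> R}) (y : E Y),
    inQ Q P -> marg h P y != 0 -> inQ Q (cond h P y).

Definition act (R : realType) (S : infoStructure) (alpha : R) (X Y : Ob S)
  (h : arr X Y) (g : {ffun E X -> R} -> R) (P : {ffun E X -> R}) : R :=
  \sum_(y : E Y)
     (if marg h P y == 0 then 0 else powR (marg h P y) alpha * g (cond h P y)).

(** 1-cochain: f X Y = f_X[Y] (relevant for Y in S_X, on Q_X), with the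
    compatibility f_X[Y](P) = f_Y[Y](Y_* P). *)
Definition cochain1 (R : realType) (S : infoStructure) (Q : probFunctor R S)
  (f : forall X : Ob S, Ob S -> {ffun E X -> R} -> R) : Prop :=
  forall X Y (h : arr X Y) (P : {ffun E X -> R}),
    inQ Q P -> f X Y P = f Y Y (marg h P).

Definition cocycle1 (R : realType) (S : infoStructure) (Q : probFunctor R S)
  (alpha : R) (f : forall X : Ob S, Ob S -> {ffun E X -> R} -> R) : Prop :=
  cochain1 Q f /\
  forall X Y Z YZ (hY : arr X Y) (hZ : arr X Z), is_meet (@arr S) YZ Y Z ->
    forall P : {ffun E X -> R}, inQ Q P ->
      act alpha hY (f X Z) P - f X YZ P + f X Y P = 0.

(** Taking Y = Z in the cocycle identity, and using YY = Y, gives Y.f[Y] = 0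
    on Q_X.  For Y = 1 the action is trivial (every law has total mass 1 and
    conditioning on the terminal variable changes nothing), so f[1] = 0; for
    Y = X and a Dirac law the action is again trivial (the marginal of a Dirac
    law is a Dirac law, and conditioning on its only atom gives back the
    original law), so f[X](delta_x) = 0. *)
From HB Require Import structures.
From mathcomp Require Import all_boot all_order all_algebra.
From mathcomp Require Import reals exp.
Set Implicit Arguments. Unset Strict Implicit. Unset Printing Implicit Defensive.
Import Order.TTheory GRing.Theory Num.Theory.
Local Open Scope ring_scope.

Lemma is_meet_refl (S : infoStructure) (X : Ob S) : is_meet (@arr S) X X X.
Proof. by split=> [||W h _]; rewrite ?arr_refl. Qed.

Lemma Eone_eq (S : infoStructure) (y y' : E (oneS S)) : y = y'.
Proof.
have : (#|E (oneS S)| <= 1)%N by rewrite E_one.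
by move/fintype_le1P => le1; rewrite (le1 y) (le1 y').
Qed.

Section Action.
Variables (R : realType) (S : infoStructure) (alpha : R).

Lemma act_cocycle_diag (Q : probFunctor R S)
    (f : forall X : Ob S, Ob S -> {ffun E X -> R} -> R) :
  cocycle1 Q alpha f -> forall (X Y : Ob S) (h : arr X Y) (P : {ffun E X -> R}),
  inQ Q P -> act alpha h (f X Y) P = 0.
Proof.
move=> [_ cocycle] X Y h P QP.
by have := cocycle X Y Y Y h h (is_meet_refl Y) P QP; rewrite addrNK.
Qed.

Lemma act_one (X : Ob S) (h : arr X (oneS S)) (g : {ffun E X -> R} -> R)
    (P : {ffun E X -> R}) :
  is_law P -> act alpha h g P = g P.
Proof.
move=> [_ sumP1].
have margP y : marg h P y = 1.
  rewrite ffunE (eq_bigl xpredT) // => x.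
  by rewrite (Eone_eq (Emap h x) y) eqxx.
have condP y : cond h P y = P.
  by apply/ffunP => x; rewrite ffunE margP divr1 (Eone_eq (Emap h x) y) eqxx.
have [y0 _] : exists y0 : E (oneS S), y0 \in E (oneS S).
  by apply/card_gt0P; rewrite E_one.
rewrite /act (big_pred1 y0) => [|y]; last by rewrite /= (Eone_eq y y0) eqxx.
by rewrite margP oner_eq0 powR1 mul1r condP.
Qed.

Lemma marg_dirac (X : Ob S) Y (h : arr X Y) (x : E X) :
  marg h (dirac R x) = dirac R (Emap h x).
Proof.
apply/ffunP => y; rewrite !ffunE big_mkcond (bigD1 x) //= big1 => [|x' /negbTE x'x].
  by rewrite ffunE eqxx addr0 eq_sym; case: eqP.
by rewrite ffunE x'x if_same.
Qed.

Lemma cond_dirac (X : Ob S) Y (h : arr X Y) (x : E X) :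
  cond h (dirac R x) (Emap h x) = dirac R x.
Proof.
apply/ffunP => x'; rewrite ffunE marg_dirac !ffunE eqxx divr1.
by case: (x' =P x) => [->|_]; rewrite ?eqxx ?if_same.
Qed.

Lemma act_dirac (X : Ob S) Y (h : arr X Y) (g : {ffun E X -> R} -> R) (x : E X) :
  act alpha h g (dirac R x) = g (dirac R x).
Proof.
rewrite /act (bigD1 (Emap h x)) //= big1 => [|y /negbTE ynx].
  by rewrite marg_dirac ffunE eqxx oner_eq0 powR1 mul1r cond_dirac addr0.
by rewrite marg_dirac ffunE ynx eqxx.
Qed.

End Action.

Theorem proposition4p7 (R : realType) (S : infoStructure) (Q : probFunctor R S)
  (alpha : R) (f : forall X : Ob S, Ob S -> {ffun E X -> R} -> R) :
  adapted Q -> 0 < alpha -> cocycle1 Q alpha f ->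
  (forall (X : Ob S) (P : {ffun E X -> R}), inQ Q P -> f X (oneS S) P = 0) /\
  (forall (X : Ob S) (x : E X), inQ Q (dirac R x) -> f X X (dirac R x) = 0).
Proof.
move=> _ _ cocycle; split.
- move=> X P QP; rewrite -(act_one alpha (one_terminal X)); last by case: QP.
  exact: (act_cocycle_diag cocycle).
- move=> X x Qx; rewrite -(act_dirac alpha (arr_refl X)).
  exact: (act_cocycle_diag cocycle).
Qed.
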